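(* Let $A$ be an associative $k$-algebra with $\mathrm{Ann}(A)=0$ or $A^2=A$. Then the action of $\mathrm{Bim}(A)$ on $A$ is an action of associative algebras, the homomorphism $A\to\mathrm{Bim}(A)$, $a\mapsto(a*-,\,-*a)$, is an actor of $A$, and $\mathfrak{B}(A)\cong\mathrm{Bim}(A)=\mathrm{Actor}(A)$.
   Context: $k$ is a commutative ring with unit; associative algebras are not assumed unital. $\mathrm{Ann}(A)=\{a\in A: a*x=x*a=0\ \forall x\in A\}$, and $A^2$ is the $k$-submodule spanned by all products. An action of an associative algebra $B$ on an associative algebra $A$ is a pair of bilinear maps $B\times A\to A$, $(b,a)\mapsto b*a$, and $A\times B\to A$, $(a,b)\mapsto a*b$, such that for all $a,a_1,a_2\in A$, $b,b_1,b_2\in B$: $(b_1*b_2)*a=b_1*(b_2*a)$; $a*(b_1*b_2)=(a*b_1)*b_2$; $(b_1*a)*b_2=b_1*(a*b_2)$; $b*(a_1*a_2)=(b*a_1)*a_2$; $(a_1*a_2)*b=a_1*(a_2*b)$; $a_1*(b*a_2)=(a_1*b)*a_2$. A crossed module of associative algebras is an algebra homomorphism $\partial:A\to G$ with an action of $G$ on $A$ such that $\partial(g*a)=g*\partial a$, $\partial(a*g)=\partial a*g$, $\partial a*a'=a*a'$, $a'*\partial a=a'*a$. An actor of $A$ is a crossed module $\partial:A\to\mathrm{Actor}(A)$ such that for every associative algebra $C$ with an action on $A$ there is a unique homomorphism $\varphi:C\to\mathrm{Actor}(A)$ with $\varphi(c)*a=c*a$ and $a*\varphi(c)=a*c$ for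 all $c\in C$, $a\in A$. Bimultipliers: $\mathrm{Bim}(A)$ is the set of pairs $f=(f*,*f)$ of $k$-linear maps $A\to A$ (values written $f*a$, $a*f$) such that $f*(a*a')=(f*a)*a'$, $(a*a')*f=a*(a'*f)$, $a*(f*a')=(a*f)*a'$. It is a $k$-module componentwise and an associative algebra with product $f*f'$ given by $(f*f')*a=f*(f'*a)$ and $a*(f*f')=(a*f)*f'$; it acts on $A$ by $(f,a)\mapsto f*a$, $(a,f)\mapsto a*f$. Construction of $\mathfrak{B}(A)$: let $(B_j)_{j\in J}$ range over all associative algebras equipped with an action on $A$ (one index per action). For $b\in B_j$ let $\mathbf b$ be the pair of $k$-linear maps $a\mapsto b*a$, $a\mapsto a*b$. On such pairs define addition and scalar multiplication componentwise and the product by $(x*y)*a=x*(y*a)$, $a*(x*y)=(a*x)*y$. $\mathfrak{B}(A)$ is the set of pairs obtained from all the $\mathbf b$ by iterating these operations. *)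

From HB Require Import structures.
From mathcomp Require Import all_boot all_algebra.
From mathcomp Require Import boolp.
Set Implicit Arguments. Unset Strict Implicit. Unset Printing Implicit Defensive.
Import GRing.Theory.
Local Open Scope ring_scope.

Record algebra (k : comPzRingType) := Algebra {
  alg_car :> lmodType k;
  amul : alg_car -> alg_car -> alg_car;
  amulA : forall x y z, amul x (amul y z) = amul (amul x y) z;
  amulDl : forall (c : k) x y z, amul (c *: x + y) z = c *: amul x z + amul y z;
  amulDr : forall (c : k) x y z, amul x (c *: y + z) = c *: amul x y + amul x z
}.
Arguments amul {k} A _ _ : rename.

Section Defs.
Variable k : comPzRingType.

Definition ann_zero (A : algebra k) : Prop :=
  forall a : A, (forall x : A, amul A a x = 0 /\ amul A x a = 0) -> a = 0.

(* A^2 = A : every element lies in the k-submodule spanned by all products *)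
Definition sq_eq (A : algebra k) : Prop :=
  forall a : A, exists (n : nat) (c : 'I_n -> k) (x y : 'I_n -> A),
    a = \sum_(i < n) c i *: amul A (x i) (y i).

Definition is_hom (A G : algebra k) (f : A -> G) : Prop :=
  (forall (c : k) x y, f (c *: x + y) = c *: f x + f y) /\
  (forall x y, f (amul A x y) = amul G (f x) (f y)).

Definition is_action (B A : algebra k) (l : B -> A -> A) (r : A -> B -> A) : Prop :=
  (forall (c : k) b b' a, l (c *: b + b') a = c *: l b a + l b' a) /\
  (forall (c : k) b a a', l b (c *: a + a') = c *: l b a + l b a') /\
  (forall (c : k) a a' b, r (c *: a + a') b = c *: r a b + r a' b) /\
  (forall (c : k) a b b', r a (c *: b + b') = c *: r a b + r a b') /\
  (forall b1 b2 a, l (amul B b1 b2) a = l b1 (l b2 a)) /\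
  (forall a b1 b2, r a (amul B b1 b2) = r (r a b1) b2) /\
  (forall b1 a b2, r (l b1 a) b2 = l b1 (r a b2)) /\
  (forall b a1 a2, l b (amul A a1 a2) = amul A (l b a1) a2) /\
  (forall a1 a2 b, r (amul A a1 a2) b = amul A a1 (r a2 b)) /\
  (forall a1 b a2, amul A a1 (l b a2) = amul A (r a1 b) a2).

Definition is_crossed_module (A G : algebra k) (d : A -> G)
    (l : G -> A -> A) (r : A -> G -> A) : Prop :=
  is_hom d /\ is_action l r /\
  (forall g a, d (l g a) = amul G g (d a)) /\
  (forall a g, d (r a g) = amul G (d a) g) /\
  (forall a a', l (d a) a' = amul A a a') /\
  (forall a a', r a' (d a) = amul A a' a).

Definition is_actor (A G : algebra k) (d : A -> G)
    (l : G -> A -> A) (r : A -> G -> A) : Prop :=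
  is_crossed_module d l r /\
  forall (C : algebra k) (lc : C -> A -> A) (rc : A -> C -> A),
    is_action lc rc ->
    exists! phi : C -> G, is_hom phi /\
      (forall (c : C) (a : A), l (phi c) a = lc c a /\ r a (phi c) = rc a c).

Section Bim.
Variable A : algebra k.
Local Notation "x *a y" := (amul A x y) (at level 40, left associativity).

Record bim := Bim {
  bl : A -> A;   (* f * - *)
  br : A -> A;   (* - * f *)
  bl_lin : forall (c : k) a a', bl (c *: a + a') = c *: bl a + bl a';
  br_lin : forall (c : k) a a', br (c *: a + a') = c *: br a + br a';
  bim_l : forall a a', bl (a *a a') = bl a *a a';
  bim_r : forall a a', br (a *a a') = a *a br a';
  bim_m : forall a a', a *a bl a' = br a *a a'
}.

Lemma bim_ext (f g : bim) : bl f =1 bl g -> br f =1 br g -> f = g.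
Proof.
case: f => l r ll rl h1 h2 h3; case: g => l' r' ll' rl' h1' h2' h3' /= El Er.
move: (funext El) (funext Er) => E1 E2; subst l' r'.
by congr Bim; apply: Prop_irrelevance.
Qed.

HB.instance Definition _ := gen_eqMixin bim.
HB.instance Definition _ := gen_choiceMixin bim.

Lemma lin0 (f : A -> A) :
  (forall (c : k) a a', f (c *: a + a') = c *: f a + f a') -> f 0 = 0.
Proof.
move=> H; have := H 1 0 0; rewrite !scale1r addr0 => E.
by apply: (addrI (f 0)); rewrite -E addr0.
Qed.

Lemma linD (f : A -> A) :
  (forall (c : k) a a', f (c *: a + a') = c *: f a + f a') ->
  forall a a', f (a + a') = f a + f a'.
Proof. by move=> H a a'; have := H 1 a a'; rewrite !scale1r. Qed.

Lemma linZ (f : A -> A) :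
  (forall (c : k) a a', f (c *: a + a') = c *: f a + f a') ->
  forall (c : k) a, f (c *: a) = c *: f a.
Proof. by move=> H c a; have := H c a 0; rewrite !addr0 (lin0 H) addr0. Qed.

Lemma amul0r (a : A) : 0 *a a = 0.
Proof.
have := @amulDl _ A 1 0 0 a; rewrite !scale1r addr0 => E.
by apply: (addrI (0 *a a)); rewrite -E addr0.
Qed.

Lemma amulr0 (a : A) : a *a 0 = 0.
Proof.
have := @amulDr _ A 1 a 0 0; rewrite !scale1r addr0 => E.
by apply: (addrI (a *a 0)); rewrite -E addr0.
Qed.

Lemma amulDl' (x y z : A) : (x + y) *a z = x *a z + y *a z.
Proof. by have := @amulDl _ A 1 x y z; rewrite !scale1r. Qed.
Lemma amulDr' (x y z : A) : x *a (y + z) = x *a y + x *a z.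
Proof. by have := @amulDr _ A 1 x y z; rewrite !scale1r. Qed.
Lemma amulZl (c : k) (x z : A) : (c *: x) *a z = c *: (x *a z).
Proof. by have := @amulDl _ A c x 0 z; rewrite !addr0 amul0r addr0. Qed.
Lemma amulZr (c : k) (x z : A) : x *a (c *: z) = c *: (x *a z).
Proof. by have := @amulDr _ A c x z 0; rewrite !addr0 amulr0 addr0. Qed.
Lemma amulNl (x z : A) : (- x) *a z = - (x *a z).
Proof. by rewrite -scaleN1r amulZl scaleN1r. Qed.
Lemma amulNr (x z : A) : x *a (- z) = - (x *a z).
Proof. by rewrite -scaleN1r amulZr scaleN1r. Qed.

Definition bim0 : bim.
Proof.
refine (@Bim (fun _ => 0) (fun _ => 0) _ _ _ _ _).
- by move=> c a a' /=; rewrite scaler0 addr0.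
- by move=> c a a' /=; rewrite scaler0 addr0.
- by move=> a a' /=; rewrite amul0r.
- by move=> a a' /=; rewrite amulr0.
- by move=> a a' /=; rewrite amulr0 amul0r.
Defined.

Definition bimopp (f : bim) : bim.
Proof.
refine (@Bim (fun a => - bl f a) (fun a => - br f a) _ _ _ _ _).
- by move=> c a a' /=; rewrite bl_lin opprD scalerN.
- by move=> c a a' /=; rewrite br_lin opprD scalerN.
- by move=> a a' /=; rewrite bim_l amulNl.
- by move=> a a' /=; rewrite bim_r amulNr.
- by move=> a a' /=; rewrite amulNr amulNl bim_m.
Defined.

Definition bimadd (f g : bim) : bim.
Proof.
refine (@Bim (fun a => bl f a + bl g a) (fun a => br f a + br g a) _ _ _ _ _).
- by move=> c a a' /=; rewrite !bl_lin scalerDr addrACA.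
- by move=> c a a' /=; rewrite !br_lin scalerDr addrACA.
- by move=> a a' /=; rewrite !bim_l amulDl'.
- by move=> a a' /=; rewrite !bim_r amulDr'.
- by move=> a a' /=; rewrite amulDr' amulDl' !bim_m.
Defined.

Definition bimscale (c : k) (f : bim) : bim.
Proof.
refine (@Bim (fun a => c *: bl f a) (fun a => c *: br f a) _ _ _ _ _).
- by move=> c' a a' /=; rewrite bl_lin scalerDr !scalerA mulrC.
- by move=> c' a a' /=; rewrite br_lin scalerDr !scalerA mulrC.
- by move=> a a' /=; rewrite bim_l amulZl.
- by move=> a a' /=; rewrite bim_r amulZr.
- by move=> a a' /=; rewrite amulZr amulZl bim_m.
Defined.

Fact bimaddA : associative bimadd.
Proof. by move=> f g h; apply: bim_ext => a /=; rewrite addrA. Qed.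
Fact bimaddC : commutative bimadd.
Proof. by move=> f g; apply: bim_ext => a /=; rewrite addrC. Qed.
Fact bimadd0 : left_id bim0 bimadd.
Proof. by move=> f; apply: bim_ext => a /=; rewrite add0r. Qed.
Fact bimaddN : left_inverse bim0 bimopp bimadd.
Proof. by move=> f; apply: bim_ext => a /=; rewrite addNr. Qed.

HB.instance Definition _ :=
  GRing.isZmodule.Build bim bimaddA bimaddC bimadd0 bimaddN.

Fact bimscaleA (a b : k) (v : bim) : bimscale a (bimscale b v) = bimscale (a * b) v.
Proof. by apply: bim_ext => x /=; rewrite scalerA. Qed.
Fact bimscale1 : left_id 1 bimscale.
Proof. by move=> f; apply: bim_ext => a /=; rewrite scale1r. Qed.
Fact bimscaleDr : right_distributive bimscale +%R.
Proof. by move=> c f g; apply: bim_ext => a /=; rewrite scalerDr. Qed.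
Fact bimscaleDl (v : bim) : {morph bimscale^~ v : a b / a + b}.
Proof. by move=> a b; apply: bim_ext => x /=; rewrite scalerDl. Qed.

HB.instance Definition _ :=
  GRing.Zmodule_isLmodule.Build k bim bimscaleA bimscale1 bimscaleDr bimscaleDl.

(* product: (f*f')*a = f*(f'*a), a*(f*f') = (a*f)*f' *)
Definition bimmul (f g : bim) : bim.
Proof.
refine (@Bim (fun a => bl f (bl g a)) (fun a => br g (br f a)) _ _ _ _ _).
- by move=> c a a' /=; rewrite !bl_lin.
- by move=> c a a' /=; rewrite !br_lin.
- by move=> a a' /=; rewrite !bim_l.
- by move=> a a' /=; rewrite !bim_r.
- by move=> a a' /=; rewrite !bim_m.
Defined.

Fact bimmulA (x y z : bim) : bimmul x (bimmul y z) = bimmul (bimmul x y) z.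
Proof. by apply: bim_ext. Qed.
Fact bimmulDl (c : k) (x y z : bim) :
  bimmul (c *: x + y) z = c *: bimmul x z + bimmul y z.
Proof. by apply: bim_ext => a //=; rewrite br_lin. Qed.
Fact bimmulDr (c : k) (x y z : bim) :
  bimmul x (c *: y + z) = c *: bimmul x y + bimmul x z.
Proof. by apply: bim_ext => a //=; rewrite bl_lin. Qed.

Definition Bim_alg : algebra k := @Algebra k bim bimmul bimmulA bimmulDl bimmulDr.

Definition bim_lact (f : Bim_alg) (a : A) : A := bl f a.
Definition bim_ract (a : A) (f : Bim_alg) : A := br f a.

Definition inner_bim (x : A) : Bim_alg.
Proof.
refine (@Bim (fun a => x *a a) (fun a => a *a x) _ _ _ _ _).
- by move=> c a a' /=; rewrite amulDr.
- by move=> c a a' /=; rewrite amulDl.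
- by move=> a a' /=; rewrite amulA.
- by move=> a a' /=; rewrite amulA.
- by move=> a a' /=; rewrite amulA.
Defined.

(* The set frak{B}(A) of pairs (left map, right map), generated from all
   pairs b = (b * -, - * b) coming from algebras B acting on A, closed under
   componentwise addition, scalar multiplication and the product
   (x*y)*a = x*(y*a), a*(x*y) = (a*x)*y. *)
Inductive frakB : (A -> A) * (A -> A) -> Prop :=
| frakB_gen (B : algebra k) (l : B -> A -> A) (r : A -> B -> A) (b : B) :
    is_action l r -> frakB (l b, fun a => r a b)
| frakB_add x y : frakB x -> frakB y ->
    frakB (fun a => x.1 a + y.1 a, fun a => x.2 a + y.2 a)
| frakB_scale (c : k) x : frakB x ->
    frakB (fun a => c *: x.1 a, fun a => c *: x.2 a)
| frakB_mul x y : frakB x -> frakB y ->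
    frakB (fun a => x.1 (y.1 a), fun a => y.2 (x.2 a)).

End Bim.
End Defs.

From HB Require Import structures.
From mathcomp Require Import all_boot all_algebra.
From mathcomp Require Import boolp.
Set Implicit Arguments. Unset Strict Implicit. Unset Printing Implicit Defensive.
Import GRing.Theory.
Local Open Scope ring_scope.

(** Everything hinges on one identity: under either hypothesis any two
  bimultipliers [f], [g] satisfy [(f*a)*g = f*(a*g)].  If [Ann(A) = 0] this
  holds because the difference of the two sides annihilates [A]; if [A^2 = A]
  it suffices to check it on products [x*y], where both sides equal
  [(f*x)*(y*g)].  This identity is exactly the missing action axiom for
  [Bim(A)], and then every action of an algebra [C] on [A] factors uniquely
  through the bimultiplier [c |-> (c*-, -*c)].  The same construction shows
  that the pairs generating [B(A)] are bimultipliers, while [Bim(A)] acts on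
  [A] itself, so [B(A)] is exactly the set of bimultipliers. *)

Lemma linear_sumZ (k : pzRingType) (U V : lmodType k) (f : U -> V) :
  linear f -> forall n (c : 'I_n -> k) (z : 'I_n -> U),
  f (\sum_(i < n) c i *: z i) = \sum_(i < n) c i *: f (z i).
Proof.
move=> Lf n c z.
pose F : {linear U -> V} := HB.pack f (GRing.isLinear.Build k U V _ f Lf).
by rewrite -[f]/(F : U -> V) linear_sum; under eq_bigr do rewrite linearZ.
Qed.

Section Bimultipliers.
Variables (k : comPzRingType) (A : algebra k).
Local Notation "x *a y" := (amul A x y) (at level 40, left associativity).

Lemma sq_eq_linear_ext (V : lmodType k) (f g : A -> V) :
  sq_eq A -> linear f -> linear g ->
  (forall x y, f (x *a y) = g (x *a y)) -> f =1 g.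
Proof.
move=> sqA Lf Lg fg a; have [n [c [x [y ->]]]] := sqA a.
by rewrite !linear_sumZ //; apply: eq_bigr => i _; rewrite fg.
Qed.

Section Commutation.
Variables f g : bim A.

Lemma bim_comm_amull (a x : A) :
  br g (bl f a) *a x = bl f (br g a) *a x.
Proof. by rewrite -bim_m -bim_l bim_m bim_l. Qed.

Lemma bim_comm_amulr (a x : A) :
  x *a br g (bl f a) = x *a bl f (br g a).
Proof. by rewrite -bim_r bim_m bim_r bim_m. Qed.

Lemma bim_comm_ann : ann_zero A -> forall a, br g (bl f a) = bl f (br g a).
Proof.
move=> annA a; apply/eqP; rewrite -subr_eq0; apply/eqP; apply: annA => x.
by rewrite amulDl' amulDr' amulNl amulNr bim_comm_amull bim_comm_amulr !subrr.
Qed.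

Lemma bim_comm_sq : sq_eq A -> forall a, br g (bl f a) = bl f (br g a).
Proof.
move=> sqA; apply: sq_eq_linear_ext => // [c a a'|c a a'|x y] /=.
- by rewrite bl_lin br_lin.
- by rewrite br_lin bl_lin.
- by rewrite bim_l bim_r bim_r bim_l.
Qed.

End Commutation.

Lemma bim_action :
  (forall (f g : bim A) a, br g (bl f a) = bl f (br g a)) ->
  is_action (@bim_lact k A) (@bim_ract k A).
Proof.
move=> bim_comm; rewrite /bim_lact /bim_ract.
do 10?split=> //; move=> *; by rewrite ?bl_lin ?br_lin ?bim_comm ?bim_l ?bim_r ?bim_m.
Qed.

Lemma inner_bim_hom : is_hom (@inner_bim k A).
Proof.
split=> [c x y|x y]; apply: bim_ext => a /=.
- exact: amulDl.
- exact: amulDr.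
- by rewrite amulA.
- by rewrite amulA.
Qed.

Lemma inner_bim_crossed_module :
  is_action (@bim_lact k A) (@bim_ract k A) ->
  is_crossed_module (@inner_bim k A) (@bim_lact k A) (@bim_ract k A).
Proof.
move=> bim_act; split; first exact: inner_bim_hom.
split=> //; split=> [g a|].
  by apply: bim_ext => x /=; [rewrite bim_l | exact: bim_m].
split=> [a g|//].
by apply: bim_ext => x /=; [rewrite bim_m | rewrite bim_r].
Qed.

Section ActionBimultiplier.
Variables (C : algebra k) (lc : C -> A -> A) (rc : A -> C -> A).
Hypothesis act : is_action lc rc.

Definition action_bim (c : C) : bim A.
Proof.
refine (@Bim k A (lc c) (rc^~ c) _ _ _ _ _);
  have [_ [lc_lin [rc_lin [_ [_ [_ [_ [lc_amul [rc_amul amul_lcr]]]]]]]]] := act.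
- by move=> *; rewrite lc_lin.
- by move=> *; rewrite rc_lin.
- by move=> *; rewrite lc_amul.
- by move=> *; rewrite rc_amul.
- by move=> *; rewrite amul_lcr.
Defined.

Lemma action_bim_hom : is_hom (action_bim : C -> Bim_alg A).
Proof.
have [lcD [_ [_ [rcD [lcM [rcM _]]]]]] := act.
split=> [c x y|x y]; apply: bim_ext => a /=.
- exact: lcD.
- exact: rcD.
- exact: lcM.
- exact: rcM.
Qed.

Lemma action_bim_unique (phi : C -> Bim_alg A) :
  (forall c a, bim_lact (phi c) a = lc c a /\ bim_ract a (phi c) = rc a c) ->
  phi = action_bim.
Proof.
move=> phi_act; apply: funext => c.
by apply: bim_ext => a; [exact: (phi_act c a).1 | exact: (phi_act c a).2].
Qed.

End ActionBimultiplier.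

Lemma inner_bim_actor :
  is_action (@bim_lact k A) (@bim_ract k A) ->
  is_actor (@inner_bim k A) (@bim_lact k A) (@bim_ract k A).
Proof.
move=> bim_act; split; first exact: inner_bim_crossed_module.
move=> C lc rc act; exists (action_bim act); split.
  by split; [exact: action_bim_hom|].
by move=> phi [_ phi_act]; rewrite (action_bim_unique act phi_act).
Qed.

Lemma frakB_bim (p : (A -> A) * (A -> A)) :
  frakB p -> exists f : Bim_alg A, p = (bl f, br f).
Proof.
elim=> {p} [B l r b act|_ _ _ [f ->] _ [g ->]|c _ _ [f ->]|_ _ _ [f ->] _ [g ->]].
- by exists (action_bim act b).
- by exists (f + g).
- by exists (c *: f).
- by exists (amul (Bim_alg A) f g).
Qed.

Lemma frakBP :
  is_action (@bim_lact k A) (@bim_ract k A) ->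
  forall p, frakB p <-> exists f : Bim_alg A, p = (bl f, br f).
Proof.
move=> bim_act p; split; first exact: frakB_bim.
by move=> [f ->]; apply: (frakB_gen f bim_act).
Qed.

End Bimultipliers.

Theorem proposition4p7 (k : comPzRingType) (A : algebra k) :
  ann_zero A \/ sq_eq A ->
  [/\ is_action (@bim_lact k A) (@bim_ract k A),
      is_actor (@inner_bim k A) (@bim_lact k A) (@bim_ract k A)
    & forall p : (A -> A) * (A -> A),
        frakB p <-> exists f : Bim_alg A, p = (bl f, br f)].
Proof.
move=> hyp.
have bim_comm (f g : bim A) a : br g (bl f a) = bl f (br g a).
  by case: hyp => [annA|sqA]; [exact: bim_comm_ann | exact: bim_comm_sq].
have bim_act := bim_action bim_comm.
by split; [exact: bim_act | exact: inner_bim_actor | exact: frakBP].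
Qed.
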